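(* Let $\mathcal{C}\subseteq 2^{[n]}$ and $\mathcal{D}\subseteq 2^{[m]}$ be codes and let $f:\mathcal{C}\to\mathcal{D}$ be a morphism. If $\mathcal{C}$ is convex, then the image code $f(\mathcal{C})\subseteq 2^{[m]}$ is convex and $\mathrm{mindim}(f(\mathcal{C}))\le \mathrm{mindim}(\mathcal{C})$. In particular, if $\mathcal{C}$ and $\mathcal{D}$ are isomorphic, then $\mathcal{C}$ is convex if and only if $\mathcal{D}$ is convex, and when both are convex they have the same minimal embedding dimension.
   Context: A code is a subset $\mathcal{C}\subseteq 2^{[n]}$ (a family of subsets of $[n]=\{1,\dots,n\}$); its elements are called codewords. For $\sigma\subseteq[n]$, the trunk of $\sigma$ in $\mathcal{C}$ is $\mathrm{Tk}_{\mathcal{C}}(\sigma)=\{c\in\mathcal{C}\mid \sigma\subseteq c\}$. A subset of $\mathcal{C}$ is a trunk in $\mathcal{C}$ if it is empty or equals $\mathrm{Tk}_{\mathcal{C}}(\sigma)$ for some $\sigma\subseteq[n]$. A function $f:\mathcal{C}\to\mathcal{D}$ between codes is a morphism if for every trunk $T$ in $\mathcal{D}$, the preimage $f^{-1}(T)$ is a trunk in $\mathcal{C}$; it is an isomorphism if it has an inverse function that is also a morphism. Given sets $U_1,\dots,U_n\subseteq X$, the code of $\mathcal{U}=\{U_1,\dots,U_n\}$ in $X$ is $\mathrm{code}(\mathcal{U},X)=\{\sigma\subseteq[n]\mid \bigcap_{i\in\sigma}U_i\setminus\bigcup_{j\notin\sigma}U_j\neq\emptyset\}$, where the empty intersection is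 $X$. A code $\mathcal{C}\subseteq 2^{[n]}$ is convex if $\mathcal{C}=\mathrm{code}(\mathcal{U},X)$ for some open convex $X\subseteq\mathbb{R}^d$ and convex open sets $U_1,\dots,U_n\subseteq X$; $\mathrm{mindim}(\mathcal{C})$ is the smallest such $d$. *)

From Stdlib Require Import Reals.
From mathcomp Require Import all_boot.
Set Implicit Arguments. Unset Strict Implicit. Unset Printing Implicit Defensive.

Definition point (d : nat) := 'I_d -> R.

(* Open subset of R^d (sup-norm balls; same topology as Euclidean). *)
Definition is_open (d : nat) (U : point d -> Prop) : Prop :=
  forall x, U x -> exists eps : R, Rlt 0 eps /\
    forall y : point d, (forall i, Rlt (Rabs (y i - x i)) eps) -> U y.

Definition is_convex_set (d : nat) (U : point d -> Prop) : Prop :=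
  forall x y t, U x -> U y -> Rle 0 t -> Rle t 1 ->
    U (fun i => Rplus (Rmult t (x i)) (Rmult (Rminus 1 t) (y i))).

Definition code (n : nat) := {set {set 'I_n}}.

Definition Tk n (C : code n) (sigma : {set 'I_n}) : code n :=
  [set c in C | sigma \subset c].

Definition is_trunk n (C : code n) (T : code n) : Prop :=
  T = set0 \/ exists sigma, T = Tk C sigma.

(* f : C -> D is represented by a total function on codewords which maps C
   into D; only its values on C matter. *)
Definition maps_into n m (C : code n) (D : code m) (f : {set 'I_n} -> {set 'I_m}) :=
  forall c, c \in C -> f c \in D.

Definition preimage n m (C : code n) (f : {set 'I_n} -> {set 'I_m}) (T : code m) : code n :=
  [set c in C | f c \in T].

Definition code_morphism n m (C : code n) (D : code m) (f : {set 'I_n} -> {set 'I_m}) :=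
  maps_into C D f /\ forall T, is_trunk D T -> is_trunk C (preimage C f T).

Definition codes_isomorphic n m (C : code n) (D : code m) : Prop :=
  exists (f : {set 'I_n} -> {set 'I_m}) (g : {set 'I_m} -> {set 'I_n}),
    [/\ code_morphism C D f, code_morphism D C g,
        (forall c, c \in C -> g (f c) = c) &
        (forall e, e \in D -> f (g e) = e)].

Definition is_code_of n d (C : code n) (U : 'I_n -> point d -> Prop) (X : point d -> Prop) :=
  forall sigma : {set 'I_n}, sigma \in C <->
    exists x, X x /\ (forall i, i \in sigma -> U i x) /\ (forall j, j \notin sigma -> ~ U j x).

Definition convex_in n (d : nat) (C : code n) : Prop :=
  exists (X : point d -> Prop) (U : 'I_n -> point d -> Prop),
    is_open X /\ is_convex_set X /\
    (forall i, is_open (U i) /\ is_convex_set (U i) /\ (forall x, U i x -> X x)) /\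
    is_code_of C U X.

Definition convex_code n (C : code n) : Prop := exists d, convex_in d C.

Definition is_mindim n (C : code n) (d : nat) : Prop :=
  convex_in d C /\ forall d', convex_in d' C -> d <= d'.

(* A morphism f : C -> D pulls back each trunk Tk_D({j}) to a trunk Tk_C(s_j) of C (or to
   the empty set). If C = code(U, X), the codeword of a point x of X lies in Tk_C(s_j) exactly
   when x lies in the convex open set V_j := X ∩ ⋂_{i ∈ s_j} U_i, so code(V, X) = f(C) in the
   same dimension. An isomorphism maps C onto D, so convexity and mindim transfer both ways. *)
From Stdlib Require Import Reals.
From mathcomp Require Import all_boot.
From mathcomp Require Import boolp.
Set Implicit Arguments. Unset Strict Implicit. Unset Printing Implicit Defensive.

Lemma is_open_ext d (A B : point d -> Prop) :
  (forall y, A y <-> B y) -> is_open A -> is_open B.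
Proof.
move=> AB openA x /AB Ax; have [e [e_gt0 ball_e]] := openA x Ax.
by exists e; split => // y /ball_e /AB.
Qed.

Lemma is_openI d (A B : point d -> Prop) :
  is_open A -> is_open B -> is_open (fun y => A y /\ B y).
Proof.
move=> openA openB x [Ax Bx].
have [e1 [e1_gt0 ball1]] := openA x Ax; have [e2 [e2_gt0 ball2]] := openB x Bx.
exists (Rmin e1 e2); split; first exact: Rmin_pos.
move=> y near_xy; split; [apply: ball1 | apply: ball2] => i;
  apply: Rlt_le_trans (near_xy i) _; [exact: Rmin_l | exact: Rmin_r].
Qed.

Lemma is_open_bigI d (T : eqType) (X : point d -> Prop) (U : T -> point d -> Prop)
    (s : seq T) :
  is_open X -> (forall i, is_open (U i)) ->
  is_open (fun y => X y /\ forall i, i \in s -> U i y).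
Proof.
move=> openX openU; elim: s => [|a s IHs].
  by apply: is_open_ext openX => y; split => [|[]//].
apply: is_open_ext (is_openI (openU a) IHs) => y; split.
- by move=> [Uay [Xy Us]]; split=> // i; rewrite in_cons => /predU1P[->|/Us].
- move=> [Xy Us]; split; first by apply: Us; rewrite mem_head.
  by split=> // i si; apply: Us; rewrite in_cons si orbT.
Qed.

Lemma is_convex_bigI d (T : Type) (X : point d -> Prop) (U : T -> point d -> Prop)
    (P : T -> Prop) :
  is_convex_set X -> (forall i, is_convex_set (U i)) ->
  is_convex_set (fun y => X y /\ forall i, P i -> U i y).
Proof.
move=> convX convU x y t [Xx Ux] [Xy Uy] t_ge0 t_le1.
split; first exact: convX.
by move=> i Pi; apply: convU => //; [exact: Ux | exact: Uy].
Qed.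

Definition codeword n d (U : 'I_n -> point d -> Prop) (x : point d) : {set 'I_n} :=
  [set i | `[< U i x >]].

Lemma codewordP n d (U : 'I_n -> point d -> Prop) x i : reflect (U i x) (i \in codeword U x).
Proof. by rewrite inE; exact: asboolP. Qed.

Lemma is_code_ofE n d (C : code n) (U : 'I_n -> point d -> Prop) (X : point d -> Prop) :
  is_code_of C U X <-> forall c, c \in C <-> exists2 x, X x & c = codeword U x.
Proof.
have codewordE (c : {set 'I_n}) x : ((forall i, i \in c -> U i x) /\ (forall j, j \notin c -> ~ U j x))
    <-> c = codeword U x.
  split=> [[Uc notUc] | ->]; last first.
    by split=> [i /codewordP | j /codewordP].
  apply/setP => i; apply/idP/codewordP => [/Uc // | Uix].
  by apply/negPn/negP => /notUc.
split=> codeC c; rewrite codeC.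
- by split=> [[x [Xx /codewordE]] | [x Xx /codewordE]]; exists x.
- by split=> [[x Xx /codewordE] | [x [Xx /codewordE]]]; exists x.
Qed.

Lemma is_code_of_imset n m d (C : code n) (U : 'I_n -> point d -> Prop)
    (V : 'I_m -> point d -> Prop) (X : point d -> Prop) (g : {set 'I_n} -> {set 'I_m}) :
  is_code_of C U X -> (forall x, X x -> codeword V x = g (codeword U x)) ->
  is_code_of (g @: C) V X.
Proof.
move=> /is_code_ofE codeC gV; apply/is_code_ofE => e; split.
- move=> /imsetP[c /codeC[x Xx ->] ->].
  by exists x => //; rewrite gV.
- move=> [x Xx ->]; rewrite gV //.
  by apply: imset_f; apply/codeC; exists x.
Qed.

Section ImageRealization.

Variables (n m d : nat) (C : code n) (D : code m) (f : {set 'I_n} -> {set 'I_m}).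
Variables (X : point d -> Prop) (U : 'I_n -> point d -> Prop).
Hypothesis morph_f : code_morphism C D f.
Hypothesis openX : is_open X.
Hypothesis convX : is_convex_set X.
Hypothesis regionU : forall i, is_open (U i) /\ is_convex_set (U i) /\ (forall x, U i x -> X x).
Hypothesis codeC : is_code_of C U X.

Lemma codeword_in x : X x -> codeword U x \in C.
Proof. by move=> Xx; apply/((is_code_ofE C U X).1 codeC); exists x. Qed.

Lemma codeword_in_Tk x (s : {set 'I_n}) :
  X x -> reflect (forall i, i \in s -> U i x) (codeword U x \in Tk C s).
Proof.
move=> Xx; rewrite inE codeword_in //=.
by apply: (iffP subsetP) => [sub i /sub /codewordP | Us i /Us /codewordP].
Qed.

(* [None] encodes the empty trunk, which need not be of the form [Tk C s]. *)
Definition trunk_index (T : code n) : option {set 'I_n} := [pick s | T == Tk C s].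

Definition trunk_region (os : option {set 'I_n}) (y : point d) : Prop :=
  if os is Some s then X y /\ forall i, i \in s -> U i y else False.

Lemma trunk_region_open os : is_open (trunk_region os).
Proof.
case: os => [s|]; rewrite /trunk_region; last by move=> x [].
apply: is_open_ext (is_open_bigI (s := enum s) openX (fun i => (regionU i).1)) => y.
by split=> -[Xy Us]; split=> // i si; apply: Us; rewrite ?mem_enum in si *.
Qed.

Lemma trunk_region_convex os : is_convex_set (trunk_region os).
Proof.
case: os => [s|]; rewrite /trunk_region; last by move=> x y t [].
by apply: is_convex_bigI => // i; case: (regionU i) => _ [].
Qed.

Lemma trunk_regionP T x :
  is_trunk C T -> X x -> trunk_region (trunk_index T) x <-> codeword U x \in T.
Proof.
move=> trunkT Xx; rewrite /trunk_index; case: pickP => [s /eqP -> | notTk] /=.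
  by split=> [[_ /(codeword_in_Tk s Xx)] | /(codeword_in_Tk s Xx)].
case: trunkT => [-> | [s T_Tk]]; first by rewrite inE.
by move: (notTk s); rewrite T_Tk eqxx.
Qed.

Lemma preimage_trunk1 (j : 'I_m) : is_trunk C (preimage C f (Tk D [set j])).
Proof. by apply: morph_f.2; right; exists [set j]. Qed.

Definition image_region (j : 'I_m) : point d -> Prop :=
  trunk_region (trunk_index (preimage C f (Tk D [set j]))).

Lemma codeword_image_region x : X x -> codeword image_region x = f (codeword U x).
Proof.
move=> Xx; apply/setP => j; apply/codewordP/idP => [|fj].
- by move/(trunk_regionP (preimage_trunk1 j) Xx); rewrite !inE sub1set => /andP[_ /andP[]].
- apply/(trunk_regionP (preimage_trunk1 j) Xx).
  by rewrite !inE codeword_in //= sub1set fj morph_f.1 ?codeword_in.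
Qed.

Lemma convex_in_image : convex_in d (f @: C).
Proof.
exists X, image_region; do 3!split => //.
  move=> j; split; first exact: trunk_region_open.
  split; first exact: trunk_region_convex.
  by move=> x; rewrite /image_region; case: trunk_index => [s [] | []].
exact: is_code_of_imset codeC codeword_image_region.
Qed.

End ImageRealization.

Lemma convex_in_morphism n m d (C : code n) (D : code m) (f : {set 'I_n} -> {set 'I_m}) :
  code_morphism C D f -> convex_in d C -> convex_in d (f @: C).
Proof.
move=> morph_f [X [U [openX [convX [regionU codeC]]]]].
exact: convex_in_image morph_f openX convX regionU codeC.
Qed.

Lemma mindim_le n (C : code n) d : convex_in d C -> exists2 d', is_mindim C d' & d' <= d.
Proof.
move=> convC; have exC : exists d, `[< convex_in d C >] by exists d; apply/asboolP.
case: (ex_minnP exC) => d' /asboolP convC' minC'.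
exists d'; last exact/minC'/asboolP.
by split=> // d'' /asboolP /minC'.
Qed.

Lemma is_mindim_eq n m (C : code n) (D : code m) d1 d2 :
  (forall d, convex_in d C <-> convex_in d D) ->
  is_mindim C d1 -> is_mindim D d2 -> d1 = d2.
Proof.
move=> CD [convC minC] [convD minD]; apply/eqP; rewrite eqn_leq.
by rewrite minC ?minD //; apply/CD.
Qed.

Lemma maps_into_imset_eq n m (C : code n) (D : code m) f g :
  maps_into C D f -> maps_into D C g -> {in D, cancel g f} -> f @: C = D.
Proof.
move=> fCD gDC gK; apply/setP => e; apply/imsetP/idP => [[c Cc ->] | De].
  exact: fCD.
by exists (g e); [exact: gDC | rewrite gK].
Qed.

Lemma codes_isomorphic_convex_in n m (C : code n) (D : code m) :
  codes_isomorphic C D -> forall d, convex_in d C <-> convex_in d D.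
Proof.
move=> [f [g [morph_f morph_g fK gK]]] d.
have fC : f @: C = D := maps_into_imset_eq morph_f.1 morph_g.1 gK.
have gD : g @: D = C := maps_into_imset_eq morph_g.1 morph_f.1 fK.
split=> convex; first by rewrite -fC; exact: convex_in_morphism morph_f convex.
by rewrite -gD; exact: convex_in_morphism morph_g convex.
Qed.

Theorem theorem1p1 :
  (forall (n m : nat) (C : code n) (D : code m) (f : {set 'I_n} -> {set 'I_m}),
      code_morphism C D f -> convex_code C ->
      convex_code (f @: C) /\
      (forall d, is_mindim C d -> exists d', is_mindim (f @: C) d' /\ d' <= d)) /\
  (forall (n m : nat) (C : code n) (D : code m),
      codes_isomorphic C D ->
      (convex_code C <-> convex_code D) /\
      (forall d1 d2, is_mindim C d1 -> is_mindim D d2 -> d1 = d2)).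
Proof.
split=> [n m C D f morph_f [d convC] | n m C D isoCD].
  split=> [|d' [convC' _]]; first by exists d; exact: convex_in_morphism morph_f convC.
  by have [d'' ? ?] := mindim_le (convex_in_morphism morph_f convC'); exists d''.
have CD := codes_isomorphic_convex_in isoCD.
split; last by move=> d1 d2; apply: is_mindim_eq.
by split=> -[d convex]; exists d; apply/CD.
Qed.
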